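(* For each $t\in J$, the map $\Psi_t\colon A\to\hat D_t\setminus\hat I_t$ is a bijection.
   Context: Setup: $I=[-1,1]$, $J=(1,2]$, $f_t(x)=\min(t(x-1)+3,\,t(1-x)-1)$. $S$ is the circle of radius 2 with angular coordinate $y$; $D$ is the disk of radius 2 with coordinates $(y,s)\in S\times[0,1]$ (from a smooth embedding of the mapping cylinder of $y\mapsto\cos y$), $(y,0)=y\in S$, $(y,1)=\cos y\in I\subset D$. $\Upsilon(y,s)=(y,2s)$ for $s\le1/2$, $(y,1)$ for $s\ge1/2$. An unwrapping is a continuous family of orientation-preserving near-homeomorphisms $\bar f_t\colon D\to D$ with $\bar f_t$ injective on $I$, $\bar f_t(I)\subset\{s\ge1/2\}$, $\Upsilon\circ\bar f_t|_I=f_t$, the second coordinate of $\bar f_t(y,s)$ equal to $s$ for $s\le 1/2$; assume moreover $\bar f_t=\mathrm{id}$ on $S\times[0,3/4]$. $H_t=\Upsilon\circ\bar f_t$ (so $H_t|_I=f_t$), $\hat D_t=\varprojlim(D,H_t)=\{\langle z_0,z_1,\dots\rangle: H_t(z_{n+1})=z_n\}$, $\hat I_t=\varprojlim(I,f_t)\subset\hat D_t$. Let $A=S\times[0,\infty)$. Define $\Psi_t\colon A\to\hat D_t\setminus\hat I_t$ by: if $s\in[0,1)$, $\Psi_t(y,s)=\langle(y,s),(y,s/2),(y,s/4),\dots\rangle$; if $s\ge1$, let $k=\lfloor s\rfloor$, $u=s-k$, $v=(u+1)/2\in[1/2,1)$, and $\Psi_t(y,s)=\langle z_0,z_1,\dots\rangle$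 with $z_{k-j}=H_t^{\,j}(y,v)$ for $j=1,\dots,k$ (equivalently $f_t^{j-1}(H_t(y,v))$), $z_k=(y,v)$, and $z_{k+j}=(y,v/2^j)$ for $j\ge1$. *)

From Stdlib Require Import Reals Lra Lia ClassicalEpsilon.
Open Scope R_scope.

Definition pt := (R * R)%type.

Definition dist2 (p q : pt) : R :=
  sqrt ((fst p - fst q)^2 + (snd p - snd q)^2).

Definition inD (p : pt) : Prop := (fst p)^2 + (snd p)^2 <= 4.

Definition inI (x : R) : Prop := -1 <= x <= 1.
Definition ptI (x : R) : pt := (x, 0).
Definition inIpt (p : pt) : Prop := inI (fst p) /\ snd p = 0.

Definition inJ (t : R) : Prop := 1 < t <= 2.

Definition f (t x : R) : R := Rmin (t * (x - 1) + 3) (t * (1 - x) - 1).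

(* Hypotheses on the coordinate map phi : (y,s) |-> point of D, coming from an
   embedding of the mapping cylinder of y |-> cos y (y = angle on the circle S
   of radius 2, s in [0,1]).  *)
Record coord_system (phi : R -> R -> pt) : Prop := {
  cs_cont : forall y s eps, 0 < eps -> exists delta, 0 < delta /\
      forall y' s', Rabs (y - y') < delta -> Rabs (s - s') < delta ->
        dist2 (phi y s) (phi y' s') < eps;
  cs_per : forall y s, phi (y + 2 * PI) s = phi y s;
  cs_S : forall y, phi y 0 = (2 * cos y, 2 * sin y);
  cs_I : forall y, phi y 1 = ptI (cos y);
  cs_inj : forall y s y' s', 0 <= s <= 1 -> 0 <= s' <= 1 ->
      phi y s = phi y' s' ->
      s = s' /\ (s = 1 \/ exists k : Z, y' = y + 2 * PI * IZR k);
  cs_onto : forall p, inD p <-> exists y s, 0 <= s <= 1 /\ phi y s = p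
}.

Definition coords (phi : R -> R -> pt) (p : pt) : R * R :=
  epsilon (inhabits (0, 0))
    (fun ys => 0 <= snd ys <= 1 /\ phi (fst ys) (snd ys) = p).

Definition Upsilon (phi : R -> R -> pt) (p : pt) : pt :=
  let ys := coords phi p in phi (fst ys) (Rmin (2 * snd ys) 1).

Definition cont_on_D (h : pt -> pt) : Prop :=
  forall p, inD p -> forall eps, 0 < eps -> exists delta, 0 < delta /\
    forall q, inD q -> dist2 p q < delta -> dist2 (h p) (h q) < eps.

Definition homeo_D (h : pt -> pt) : Prop :=
  (forall p, inD p -> inD (h p)) /\ cont_on_D h /\
  exists g : pt -> pt, (forall p, inD p -> inD (g p)) /\ cont_on_D g /\
    (forall p, inD p -> g (h p) = p /\ h (g p) = p).

Definition near_homeo_D (F : pt -> pt) : Prop :=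
  (forall p, inD p -> inD (F p)) /\
  forall eps, 0 < eps -> exists h, homeo_D h /\
    forall p, inD p -> dist2 (F p) (h p) < eps.

Record unwrapping (phi : R -> R -> pt) (fbar : R -> pt -> pt) : Prop := {
  uw_cont : forall t p, inJ t -> inD p -> forall eps, 0 < eps ->
    exists delta, 0 < delta /\ forall t' q, inJ t' -> inD q ->
      Rabs (t - t') < delta -> dist2 p q < delta ->
      dist2 (fbar t p) (fbar t' q) < eps;
  uw_near : forall t, inJ t -> near_homeo_D (fbar t);
  uw_injI : forall t x x', inJ t -> inI x -> inI x' ->
      fbar t (ptI x) = fbar t (ptI x') -> x = x';
  uw_imI : forall t x, inJ t -> inI x ->
      exists y s, 1/2 <= s <= 1 /\ fbar t (ptI x) = phi y s;
  uw_Ups : forall t x, inJ t -> inI x ->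
      Upsilon phi (fbar t (ptI x)) = ptI (f t x);
  uw_level : forall t y s, inJ t -> 0 <= s <= 1/2 ->
      exists y', fbar t (phi y s) = phi y' s;
  uw_id : forall t y s, inJ t -> 0 <= s <= 3/4 ->
      fbar t (phi y s) = phi y s
}.

Definition H (phi : R -> R -> pt) (fbar : R -> pt -> pt) (t : R) (p : pt) : pt :=
  Upsilon phi (fbar t p).

Definition in_Dhat phi fbar t (z : nat -> pt) : Prop :=
  (forall n, inD (z n)) /\ (forall n, H phi fbar t (z (S n)) = z n).

(* hat I_t = inverse limit of (I, f_t), viewed inside hat D_t. *)
Definition in_Ihat (z : nat -> pt) : Prop := forall n, inIpt (z n).

Definition Psi phi fbar t (y s : R) : nat -> pt := fun n =>
  if Rlt_dec s 1 then phi y (s / 2 ^ n)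
  else
    let k := Z.to_nat (Int_part s) in
    let v := (s - INR k + 1) / 2 in
    if Nat.leb n k then Nat.iter (k - n) (H phi fbar t) (phi y v)
    else phi y (v / 2 ^ (n - k)).

Definition inA (y s : R) : Prop := 0 <= y < 2 * PI /\ 0 <= s.

From Stdlib Require Import ZArith Reals Lra Lia Psatz Classical ClassicalEpsilon Rgeom.
Open Scope R_scope.

(* A thread z of hat D_t outside hat I_t has a coordinate z_N of level < 1, since the
   points of level 1 form the arc I.  The unwrapping is the identity below level 3/4,
   and a near-homeomorphism fixing that annulus cannot carry a point of level > 3/4 to
   level < 1/2.  Hence the only H_t-preimage of (y, s) with s < 1 is (y, s/2), and from
   index N on the thread runs down the ray of angle y as (y, c / 2^m).  Such threads are
   determined by y and the height c 2^N in [0, oo), which the parameter s of Psi_t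
   reaches bijectively: s in [k, k+1) covers the heights [2^(k-1), 2^k). *)

Lemma dist2_sym p q : dist2 p q = dist2 q p.
Proof. unfold dist2. f_equal. ring. Qed.

Lemma dist2_ge0 p q : 0 <= dist2 p q.
Proof. apply sqrt_pos. Qed.

Lemma dist2_refl p : dist2 p p = 0.
Proof. unfold dist2. rewrite <- sqrt_0. f_equal. ring. Qed.

Lemma dist2_triangle p q r : dist2 p r <= dist2 p q + dist2 q r.
Proof.
  assert (E : forall a b, dist2 a b = dist_euc (fst a) (snd a) (fst b) (snd b))
    by (intros; unfold dist2, dist_euc, Rsqr; f_equal; ring).
  rewrite !E. apply triangle.
Qed.

Lemma dist2_small_eq p q : (forall eta, 0 < eta -> dist2 p q < eta) -> p = q.
Proof.
  intros Hsmall. destruct p as [a b], q as [c d].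
  assert (E : dist2 (a, b) (c, d) = 0).
  { destruct (Rle_lt_or_eq_dec _ _ (dist2_ge0 (a, b) (c, d))) as [Hpos|Hz]; auto.
    specialize (Hsmall _ Hpos). lra. }
  pose proof (pow2_ge_0 (a - c)). pose proof (pow2_ge_0 (b - d)).
  unfold dist2 in E; simpl in E. apply sqrt_eq_0 in E; [|lra].
  f_equal; nra.
Qed.

Definition seg (A B : pt) (u : R) : pt :=
  ((1 - u) * fst A + u * fst B, (1 - u) * snd A + u * snd B).

Lemma seg0 A B : seg A B 0 = A.
Proof. destruct A, B; unfold seg; simpl; f_equal; ring. Qed.

Lemma seg1 A B : seg A B 1 = B.
Proof. destruct A, B; unfold seg; simpl; f_equal; ring. Qed.

Lemma seg_inD A B u : inD A -> inD B -> 0 <= u <= 1 -> inD (seg A B u).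
Proof.
  destruct A as [a1 a2], B as [b1 b2]; unfold inD, seg; cbn [fst snd]. intros HA HB Hu.
  assert (E : ((1 - u) * a1 + u * b1) ^ 2 + ((1 - u) * a2 + u * b2) ^ 2
     = (1 - u) * (a1 ^ 2 + a2 ^ 2) + u * (b1 ^ 2 + b2 ^ 2)
       - u * (1 - u) * ((a1 - b1) ^ 2 + (a2 - b2) ^ 2)) by ring.
  pose proof (pow2_ge_0 (a1 - b1)). pose proof (pow2_ge_0 (a2 - b2)).
  assert (0 <= u * (1 - u) * ((a1 - b1) ^ 2 + (a2 - b2) ^ 2))
    by (apply Rmult_le_pos; [nra|lra]).
  rewrite E. nra.
Qed.

Lemma dist2_seg A B u u' : dist2 (seg A B u) (seg A B u') = Rabs (u - u') * dist2 A B.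
Proof.
  destruct A as [a1 a2], B as [b1 b2]; unfold dist2, seg; cbn [fst snd].
  rewrite <- (sqrt_Rsqr (Rabs (u - u'))) by apply Rabs_pos.
  rewrite <- sqrt_mult_alt by (unfold Rsqr; nra).
  f_equal. rewrite <- Rsqr_abs. unfold Rsqr. ring.
Qed.

Definition clamp (a b x : R) : R := Rmax a (Rmin x b).

Lemma clamp_range a b x : a <= b -> a <= clamp a b x <= b.
Proof. intros. unfold clamp, Rmax, Rmin. repeat destruct Rle_dec; lra. Qed.

Lemma clamp_id a b x : a <= x <= b -> clamp a b x = x.
Proof. intros. unfold clamp, Rmax, Rmin. repeat destruct Rle_dec; lra. Qed.

Lemma clamp_lipschitz a b x x' : a <= b -> Rabs (clamp a b x - clamp a b x') <= Rabs (x - x').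
Proof.
  intros. unfold clamp, Rmax, Rmin.
  repeat destruct Rle_dec; unfold Rabs; repeat destruct Rcase_abs; lra.
Qed.

Definition continuous_path (P : R -> pt) : Prop :=
  forall x eps, 0 < eps -> exists d, 0 < d /\
    forall x', Rabs (x' - x) < d -> dist2 (P x) (P x') < eps.

Definition seg_path (A B : pt) (x : R) : pt := seg A B (clamp 0 1 x).

Lemma seg_path_0 A B : seg_path A B 0 = A.
Proof. unfold seg_path. rewrite clamp_id by lra. apply seg0. Qed.

Lemma seg_path_1 A B : seg_path A B 1 = B.
Proof. unfold seg_path. rewrite clamp_id by lra. apply seg1. Qed.

Lemma seg_path_inD A B x : inD A -> inD B -> inD (seg_path A B x).
Proof. intros HA HB. apply seg_inD; auto. apply clamp_range. lra. Qed.

Lemma seg_path_ends A B x :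
  dist2 (seg_path A B x) A <= dist2 A B /\ dist2 (seg_path A B x) B <= dist2 A B.
Proof.
  unfold seg_path. pose proof (clamp_range 0 1 x ltac:(lra)). pose proof (dist2_ge0 A B).
  pose proof (dist2_seg A B (clamp 0 1 x) 0) as E0. rewrite seg0 in E0.
  pose proof (dist2_seg A B (clamp 0 1 x) 1) as E1. rewrite seg1 in E1. rewrite E0, E1.
  assert (Rabs (clamp 0 1 x - 0) <= 1) by (apply Rabs_le; lra).
  assert (Rabs (clamp 0 1 x - 1) <= 1) by (apply Rabs_le; lra).
  split; nra.
Qed.

Lemma seg_path_continuous A B : continuous_path (seg_path A B).
Proof.
  intros x eps He. pose proof (dist2_ge0 A B).
  exists (eps / (dist2 A B + 1)). split; [apply Rdiv_lt_0_compat; lra|].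
  intros x' Hx'. unfold seg_path. rewrite dist2_seg.
  pose proof (clamp_lipschitz 0 1 x x' ltac:(lra)) as Hlip.
  rewrite Rabs_minus_sym in Hx'.
  assert (Hd : Rabs (clamp 0 1 x - clamp 0 1 x') * (dist2 A B + 1) < eps).
  { replace eps with (eps / (dist2 A B + 1) * (dist2 A B + 1)) by (field; lra).
    apply Rmult_lt_compat_r; lra. }
  pose proof (Rabs_pos (clamp 0 1 x - clamp 0 1 x')). nra.
Qed.

Lemma continuity_of_eps_delta (F : R -> R) :
  (forall x eps, 0 < eps -> exists d, 0 < d /\
     forall x', Rabs (x' - x) < d -> Rabs (F x' - F x) < eps) ->
  continuity F.
Proof.
  intros HF x eps He. destruct (HF x eps He) as [d [Hd Hx]].
  exists d. split; auto. intros x' [_ Hx']. apply Hx, Hx'.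
Qed.

Definition strict_incr (G : nat -> nat) : Prop := forall n, (G n < G (S n))%nat.

Lemma strict_incr_le G n m : strict_incr G -> (n <= m)%nat -> (G n <= G m)%nat.
Proof. intros HG Hnm. induction Hnm; [lia|]. specialize (HG m). lia. Qed.

Lemma strict_incr_ge G n : strict_incr G -> (n <= G n)%nat.
Proof. intros HG. induction n; [lia|]. specialize (HG n). lia. Qed.

Lemma strict_incr_comp G1 G2 :
  strict_incr G1 -> strict_incr G2 -> strict_incr (fun n => G1 (G2 n)).
Proof.
  intros H1 H2 n. specialize (H2 n).
  pose proof (strict_incr_le G1 (S (G2 n)) (G2 (S n)) H1 ltac:(lia)).
  specialize (H1 (G2 n)). lia.
Qed.

Lemma Un_cv_subseq u l G : Un_cv u l -> strict_incr G -> Un_cv (fun n => u (G n)) l.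
Proof.
  intros Hu HG eps He. destruct (Hu eps He) as [N HN].
  exists N. intros n Hn. apply HN. pose proof (strict_incr_ge G n HG). lia.
Qed.

Fixpoint chase (next : nat -> nat -> nat) (n : nat) : nat :=
  match n with
  | O => next O O
  | S m => next (S (chase next m)) (S m)
  end.

Lemma bounded_subseq_cv (u : nat -> R) a b : (forall n, a <= u n <= b) ->
  exists G l, strict_incr G /\ a <= l <= b /\ Un_cv (fun n => u (G n)) l.
Proof.
  intros Hab.
  destruct (Bolzano_Weierstrass u _ (compact_P3 a b) Hab) as [l Hl].
  assert (Hnear : forall N eps, 0 < eps -> exists p, (N <= p)%nat /\ Rabs (u p - l) < eps).
  { intros N eps He.
    destruct (Hl (fun x => Rabs (x - l) < eps) N) as [p Hp]; [|exists p; exact Hp].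
    exists (mkposreal eps He). intros x Hx. exact Hx. }
  assert (Hbounds : a <= l <= b).
  { split; apply Rnot_lt_le; intro Hout.
    - destruct (Hnear O (a - l)) as [p [_ Hp]]; [lra|].
      specialize (Hab p). apply Rabs_def2 in Hp. lra.
    - destruct (Hnear O (l - b)) as [p [_ Hp]]; [lra|].
      specialize (Hab p). apply Rabs_def2 in Hp. lra. }
  destruct (choice (fun (Nk : nat * nat) p =>
              (fst Nk <= p)%nat /\ Rabs (u p - l) < / INR (S (snd Nk)))) as [pick Hpick].
  { intros [N k]. apply Hnear. apply Rinv_0_lt_compat, lt_0_INR. lia. }
  set (next := fun N k => pick (N, k)).
  assert (Hnext : forall N k, (N <= next N k)%nat /\ Rabs (u (next N k) - l) < / INR (S k))
    by (intros N k; apply (Hpick (N, k))).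
  exists (chase next), l. split; [|split; [exact Hbounds|]].
  - intro n. simpl. pose proof (Hnext (S (chase next n)) (S n)). lia.
  - intros eps He. destruct (archimed_cor1 eps He) as [N [HN HN0]].
    exists N. intros n Hn.
    assert (Hcl : Rabs (u (chase next n) - l) < / INR (S n)) by (destruct n; apply Hnext).
    assert (/ INR (S n) <= / INR N).
    { apply Rinv_le_contravar; [apply lt_0_INR; lia|apply le_INR; lia]. }
    unfold R_dist. lra.
Qed.

Lemma bounded_subseq_cv2 (u v : nat -> R) a b c d :
  (forall n, a <= u n <= b) -> (forall n, c <= v n <= d) ->
  exists G l m, strict_incr G /\ c <= m <= d /\
    Un_cv (fun n => u (G n)) l /\ Un_cv (fun n => v (G n)) m.
Proof.
  intros Hu Hv.
  destruct (bounded_subseq_cv u a b Hu) as [G1 [l [HG1 [_ Cl]]]].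
  destruct (bounded_subseq_cv (fun n => v (G1 n)) c d (fun n => Hv (G1 n)))
    as [G2 [m [HG2 [Hm Cm]]]].
  exists (fun n => G1 (G2 n)), l, m. split; [|split; [exact Hm|split; [|exact Cm]]].
  - apply strict_incr_comp; auto.
  - apply (Un_cv_subseq (fun n => u (G1 n))); auto.
Qed.

Lemma reduce_angle y : exists k : Z, 0 <= y + 2 * PI * IZR k < 2 * PI.
Proof.
  pose proof PI_RGT_0.
  exists (- Int_part (y / (2 * PI)))%Z. rewrite opp_IZR.
  destruct (base_Int_part (y / (2 * PI))) as [H1 H2].
  set (m := IZR (Int_part (y / (2 * PI)))) in *.
  assert (E : y = y / (2 * PI) * (2 * PI)) by (field; lra).
  split.
  - assert (m * (2 * PI) <= y / (2 * PI) * (2 * PI)) by (apply Rmult_le_compat_r; lra). nra.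
  - assert (y / (2 * PI) * (2 * PI) < (m + 1) * (2 * PI)) by (apply Rmult_lt_compat_r; lra). nra.
Qed.

Lemma angle_eq_mod_2PI y y' (k : Z) : 0 <= y < 2 * PI -> 0 <= y' < 2 * PI ->
  y' = y + 2 * PI * IZR k -> y = y'.
Proof.
  intros Hy Hy' E. pose proof PI_RGT_0.
  assert (Hk1 : IZR k < 1) by (apply Rmult_lt_reg_l with (2 * PI); lra).
  assert (Hk2 : -1 < IZR k) by (apply Rmult_lt_reg_l with (2 * PI); lra).
  apply lt_IZR in Hk1. apply lt_IZR in Hk2.
  replace k with 0%Z in E by lia. simpl in E. lra.
Qed.

Lemma backward_orbits_agree {A : Type} (F : A -> A) (z w : nat -> A) K :
  (forall n, F (z (S n)) = z n) -> (forall n, F (w (S n)) = w n) ->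
  (forall n, (K <= n)%nat -> z n = w n) -> forall n, z n = w n.
Proof.
  intros Hz Hw Htail.
  assert (Hgen : forall m n, (K <= n + m)%nat -> z n = w n).
  { induction m as [|m IH]; intros n Hn; [apply Htail; lia|].
    rewrite <- Hz, <- Hw. f_equal. apply IH. lia. }
  intro n. apply (Hgen K n). lia.
Qed.

Lemma div_pow2_le x n : 0 <= x -> 0 <= x / 2 ^ n <= x.
Proof.
  intros Hx. pose proof (pow_R1_Rle 2 n ltac:(lra)).
  split; [apply Rmult_le_pos; [lra|left; apply Rinv_0_lt_compat; lra]|].
  apply Rmult_le_reg_r with (2 ^ n); [lra|].
  replace (x / 2 ^ n * 2 ^ n) with x by (field; lra). nra.
Qed.

Lemma div_pow2_S x n : x / 2 ^ S n = x / 2 ^ n / 2.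
Proof. pose proof (pow_lt 2 n ltac:(lra)). simpl. field. lra. Qed.

Lemma pow2_bracket L : 1 <= L -> exists k, (1 <= k)%nat /\ 2 ^ k / 2 <= L < 2 ^ k.
Proof.
  intros HL.
  destruct (Pow_x_infinity 2 ltac:(rewrite Rabs_pos_eq; lra) (L + 1)) as [N HN].
  specialize (HN N (le_n N)). rewrite Rabs_pos_eq in HN by (apply pow_le; lra).
  assert (HLN : L < 2 ^ N) by lra. clear HN.
  induction N as [|N IH]; [simpl in HLN; lra|].
  destruct (Rlt_le_dec L (2 ^ N)) as [Hlt|Hge]; [apply IH; exact Hlt|].
  exists (S N). split; [lia|]. simpl in *. lra.
Qed.

(* [height s] is the level the thread Psi_t(y, s) would have at index 0 if it ran down
   the ray of angle y all the way: its tail is (y, height s / 2^n), see [Psi_tail]. *)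
Definition k_of (s : R) : nat := Z.to_nat (Int_part s).
Definition v_of (s : R) : R := (s - INR (k_of s) + 1) / 2.
Definition height (s : R) : R := if Rlt_dec s 1 then s else v_of s * 2 ^ k_of s.
Definition tail_start (s : R) : nat := if Rlt_dec s 1 then O else k_of s.

Lemma k_of_spec s : 1 <= s -> (1 <= k_of s)%nat /\ INR (k_of s) <= s < INR (k_of s) + 1.
Proof.
  intros Hs. destruct (base_Int_part s) as [H1 H2].
  assert (Hpos : (1 <= Int_part s)%Z).
  { assert (0 < Int_part s)%Z by (apply lt_IZR; simpl; lra). lia. }
  unfold k_of. rewrite INR_IZR_INZ, Z2Nat.id by lia. split; [lia|lra].
Qed.

Lemma v_of_range s : 1 <= s -> 1/2 <= v_of s < 1.
Proof. intros Hs. destruct (k_of_spec s Hs) as [_ H]. unfold v_of. lra. Qed.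

Lemma height_lt1 s : s < 1 -> height s = s.
Proof. intros Hs. unfold height. destruct Rlt_dec; lra. Qed.

Lemma height_ge1 s : 1 <= s ->
  height s = v_of s * 2 ^ k_of s /\ 1 <= 2 ^ k_of s / 2 <= height s /\ height s < 2 ^ k_of s.
Proof.
  intros Hs. unfold height. destruct Rlt_dec; [lra|].
  pose proof (v_of_range s Hs). destruct (k_of_spec s Hs) as [Hk _].
  assert (1 <= 2 ^ k_of s / 2).
  { destruct (k_of s) as [|k]; [lia|]. pose proof (pow_R1_Rle 2 k ltac:(lra)). simpl. lra. }
  split; [reflexivity|]. nra.
Qed.

Lemma height_inj s s' : 0 <= s -> 0 <= s' -> height s = height s' -> s = s'.
Proof.
  intros Hs Hs' E.
  destruct (Rlt_dec s 1) as [h|h]; destruct (Rlt_dec s' 1) as [h'|h'].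
  - rewrite !height_lt1 in E; auto.
  - destruct (height_ge1 s' ltac:(lra)) as [_ [Hb _]]. rewrite height_lt1 in E; lra.
  - destruct (height_ge1 s ltac:(lra)) as [_ [Hb _]]. rewrite (height_lt1 s') in E; lra.
  - destruct (height_ge1 s ltac:(lra)) as [E1 [[_ A1] B1]].
    destruct (height_ge1 s' ltac:(lra)) as [E2 [[_ A2] B2]].
    assert (Ek : k_of s = k_of s').
    { assert (Hsep : forall k k', (k < k')%nat -> 2 ^ k <= 2 ^ k' / 2).
      { intros k k' Hkk. pose proof (Rle_pow 2 (S k) k' ltac:(lra) Hkk) as Hpow.
        simpl in Hpow. lra. }
      destruct (Nat.lt_total (k_of s) (k_of s')) as [Hl|[Hl|Hl]]; auto.
      - pose proof (Hsep _ _ Hl). lra.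
      - pose proof (Hsep _ _ Hl). lra. }
    rewrite E1, E2, Ek in E. pose proof (pow_lt 2 (k_of s') ltac:(lra)).
    assert (Ev : v_of s = v_of s') by (apply Rmult_eq_reg_r with (2 ^ k_of s'); lra).
    unfold v_of in Ev. rewrite Ek in Ev. lra.
Qed.

Lemma height_surj L : 0 <= L -> exists s, 0 <= s /\ height s = L.
Proof.
  intros HL. destruct (Rlt_dec L 1) as [h|h].
  { exists L. split; auto. apply height_lt1; auto. }
  destruct (pow2_bracket L ltac:(lra)) as [k [Hk [Hk1 Hk2]]].
  pose proof (pow_lt 2 k ltac:(lra)).
  set (v := L / 2 ^ k).
  assert (Hv : 1/2 <= v < 1).
  { unfold v. split.
    - apply Rmult_le_reg_r with (2 ^ k); [lra|].
      replace (L / 2 ^ k * 2 ^ k) with L by (field; lra). lra.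
    - apply Rmult_lt_reg_r with (2 ^ k); [lra|].
      replace (L / 2 ^ k * 2 ^ k) with L by (field; lra). lra. }
  assert (HkR : 1 <= INR k) by (apply (le_INR 1); lia).
  exists (INR k + 2 * v - 1). split; [lra|].
  assert (Ks : k_of (INR k + 2 * v - 1) = k).
  { unfold k_of. rewrite <- (Int_part_spec _ (Z.of_nat k)); [apply Nat2Z.id|].
    rewrite <- INR_IZR_INZ. lra. }
  unfold height. destruct Rlt_dec; [lra|].
  unfold v_of. rewrite Ks. unfold v. field. lra.
Qed.

Section Coordinates.

Variable phi : R -> R -> pt.
Hypothesis Hphi : coord_system phi.

Lemma phi_periodic y s (k : Z) : phi (y + 2 * PI * IZR k) s = phi y s.
Proof.
  assert (Hnat : forall y0 (n : nat), phi (y0 + 2 * PI * INR n) s = phi y0 s).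
  { intros y0 n. induction n as [|n IH]; [simpl; f_equal; ring|].
    rewrite <- IH, <- (cs_per _ Hphi (y0 + 2 * PI * INR n)), S_INR. f_equal. ring. }
  destruct (Z.le_gt_cases 0 k) as [Hk|Hk].
  - rewrite <- (Z2Nat.id k Hk), <- INR_IZR_INZ. apply Hnat.
  - rewrite <- (Hnat _ (Z.to_nat (- k))), INR_IZR_INZ, Z2Nat.id, opp_IZR by lia.
    f_equal. ring.
Qed.

Lemma inD_phi y s : 0 <= s <= 1 -> inD (phi y s).
Proof. intros Hs. apply (cs_onto _ Hphi). exists y, s. auto. Qed.

Definition angle (p : pt) : R := fst (coords phi p).
Definition level (p : pt) : R := snd (coords phi p).

Lemma coords_spec p : inD p -> 0 <= level p <= 1 /\ phi (angle p) (level p) = p.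
Proof.
  intros HD. unfold angle, level, coords. apply epsilon_spec.
  apply (cs_onto _ Hphi) in HD. destruct HD as [y [s Hs]]. exists (y, s). exact Hs.
Qed.

Lemma level_range p : inD p -> 0 <= level p <= 1.
Proof. intros HD. apply (coords_spec p HD). Qed.

Lemma phi_angle_level p : inD p -> phi (angle p) (level p) = p.
Proof. intros HD. apply (coords_spec p HD). Qed.

Lemma level_phi y s : 0 <= s <= 1 -> level (phi y s) = s.
Proof.
  intros Hs. destruct (coords_spec _ (inD_phi y s Hs)) as [Hl E].
  apply (cs_inj _ Hphi _ _ _ _ Hl Hs E).
Qed.

Lemma phi_reduced p : inD p -> exists a, 0 <= a < 2 * PI /\ phi a (level p) = p.
Proof.
  intros HD. destruct (reduce_angle (angle p)) as [k Hk].
  exists (angle p + 2 * PI * IZR k). split; [exact Hk|].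
  rewrite phi_periodic. apply phi_angle_level, HD.
Qed.

Lemma Upsilon_coords p : Upsilon phi p = phi (angle p) (Rmin (2 * level p) 1).
Proof. reflexivity. Qed.

Lemma Upsilon_phi y s : 0 <= s <= 1 -> Upsilon phi (phi y s) = phi y (Rmin (2 * s) 1).
Proof.
  intros Hs. rewrite Upsilon_coords, level_phi by exact Hs.
  pose proof (phi_angle_level _ (inD_phi y s Hs)) as E. rewrite level_phi in E by exact Hs.
  destruct (cs_inj _ Hphi _ _ _ _ Hs Hs E) as [_ [Hs1 | [k Ek]]].
  - subst s. replace (Rmin (2 * 1) 1) with 1 by (unfold Rmin; destruct Rle_dec; lra).
    exact E.
  - rewrite Ek at 2. symmetry. apply phi_periodic.
Qed.

Lemma Upsilon_inD p : inD p -> inD (Upsilon phi p).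
Proof.
  intros HD. rewrite Upsilon_coords. pose proof (level_range p HD).
  apply inD_phi. unfold Rmin; destruct Rle_dec; lra.
Qed.

Lemma phi_notin_I y s : 0 <= s < 1 -> ~ inIpt (phi y s).
Proof.
  intros Hs [HI H0].
  assert (E : phi (acos (fst (phi y s))) 1 = phi y s).
  { rewrite (cs_I _ Hphi). unfold ptI. rewrite cos_acos by exact HI.
    destruct (phi y s); simpl in *; subst; reflexivity. }
  destruct (cs_inj _ Hphi _ 1 _ s ltac:(lra) ltac:(lra) E). lra.
Qed.

Lemma level_lt1_of_notin_I p : inD p -> ~ inIpt p -> level p < 1.
Proof.
  intros HD HnI. pose proof (level_range p HD) as Hl.
  apply Rnot_le_lt. intro H1. apply HnI.
  rewrite <- (phi_angle_level p HD). replace (level p) with 1 by lra.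
  rewrite (cs_I _ Hphi). split; [|reflexivity].
  pose proof (COS_bound (angle p)). unfold inI. simpl. lra.
Qed.

Lemma phi_cv (a b : nat -> R) A B : Un_cv a A -> Un_cv b B ->
  forall eta, 0 < eta -> exists N, forall n, (N <= n)%nat ->
    dist2 (phi A B) (phi (a n) (b n)) < eta.
Proof.
  intros Ha Hb eta Heta. destruct (cs_cont _ Hphi A B eta Heta) as [d [Hd Hcont]].
  destruct (Ha d Hd) as [N1 HN1]. destruct (Hb d Hd) as [N2 HN2].
  exists (N1 + N2)%nat. intros n Hn. apply Hcont.
  - rewrite Rabs_minus_sym. apply HN1. lia.
  - rewrite Rabs_minus_sym. apply HN2. lia.
Qed.

Lemma phi_limits_eq (a b a' b' : nat -> R) A B A' B' :
  Un_cv a A -> Un_cv b B -> Un_cv a' A' -> Un_cv b' B' ->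
  Un_cv (fun n => dist2 (phi (a n) (b n)) (phi (a' n) (b' n))) 0 ->
  phi A B = phi A' B'.
Proof.
  intros Ha Hb Ha' Hb' Hd. apply dist2_small_eq. intros eta Heta.
  destruct (phi_cv a b A B Ha Hb (eta / 3)) as [N1 HN1]; [lra|].
  destruct (phi_cv a' b' A' B' Ha' Hb' (eta / 3)) as [N2 HN2]; [lra|].
  destruct (Hd (eta / 3)) as [N3 HN3]; [lra|].
  set (n := (N1 + N2 + N3)%nat).
  specialize (HN1 n ltac:(unfold n; lia)). specialize (HN2 n ltac:(unfold n; lia)).
  specialize (HN3 n ltac:(unfold n; lia)). unfold R_dist in HN3.
  rewrite Rminus_0_r, Rabs_pos_eq in HN3 by apply dist2_ge0.
  rewrite dist2_sym in HN2.
  pose proof (dist2_triangle (phi A B) (phi (a n) (b n)) (phi A' B')).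
  pose proof (dist2_triangle (phi (a n) (b n)) (phi (a' n) (b' n)) (phi A' B')).
  lra.
Qed.

(* Otherwise convergent subsequences of parameters would give two points (A, B) and
   (A', B') with phi A B = phi A' B' but B <> B'. *)
Lemma phi_level_unif eps : 0 < eps -> exists d, 0 < d /\
  forall a b a' b', 0 <= a <= 2 * PI -> 0 <= b <= 1 -> 0 <= a' <= 2 * PI -> 0 <= b' <= 1 ->
    dist2 (phi a b) (phi a' b') < d -> Rabs (b - b') < eps.
Proof.
  intros He. apply NNPP. intro Hnot.
  set (Bad := fun (n : nat) (pq : (R * R) * (R * R)) =>
    (0 <= fst (fst pq) <= 2 * PI /\ 0 <= snd (fst pq) <= 1) /\
    (0 <= fst (snd pq) <= 2 * PI /\ 0 <= snd (snd pq) <= 1) /\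
    dist2 (phi (fst (fst pq)) (snd (fst pq))) (phi (fst (snd pq)) (snd (snd pq))) < / INR (S n) /\
    eps <= Rabs (snd (fst pq) - snd (snd pq))).
  assert (Hbad : forall n, exists pq, Bad n pq).
  { intro n. apply NNPP. intro Hn. apply Hnot. exists (/ INR (S n)).
    split; [apply Rinv_0_lt_compat, lt_0_INR; lia|].
    intros a b a' b' Ha Hb Ha' Hb' Hd. apply Rnot_le_lt. intro Hge.
    apply Hn. exists ((a, b), (a', b')). unfold Bad; simpl. tauto. }
  destruct (choice Bad Hbad) as [f Hf].
  set (a := fun n => fst (fst (f n))). set (b := fun n => snd (fst (f n))).
  set (a' := fun n => fst (snd (f n))). set (b' := fun n => snd (snd (f n))).
  destruct (bounded_subseq_cv2 a b 0 (2 * PI) 0 1) as [G1 [A [B [HG1 [HB [CA CB]]]]]];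
    try (intro n; apply (Hf n)).
  destruct (bounded_subseq_cv2 (fun n => a' (G1 n)) (fun n => b' (G1 n)) 0 (2 * PI) 0 1)
    as [G2 [A' [B' [HG2 [HB' [CA' CB']]]]]]; try (intro n; apply (Hf (G1 n))).
  set (G := fun n => G1 (G2 n)).
  assert (HG : strict_incr G) by exact (strict_incr_comp G1 G2 HG1 HG2).
  assert (CBG : Un_cv (fun n => b (G n)) B) by (apply (Un_cv_subseq (fun n => b (G1 n))); auto).
  assert (CB'G : Un_cv (fun n => b' (G n)) B') by exact CB'.
  assert (Heq : phi A B = phi A' B').
  { apply (phi_limits_eq (fun n => a (G n)) (fun n => b (G n)) (fun n => a' (G n))
             (fun n => b' (G n))); auto.
    - apply (Un_cv_subseq (fun n => a (G1 n))); auto.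
    - intros eta Heta. destruct (archimed_cor1 eta Heta) as [N [HN HN0]].
      exists N. intros n Hn. destruct (Hf (G n)) as [_ [_ [Hd _]]].
      pose proof (strict_incr_ge G n HG).
      assert (/ INR (S (G n)) <= / INR N).
      { apply Rinv_le_contravar; [apply lt_0_INR; lia|apply le_INR; lia]. }
      unfold R_dist. rewrite Rminus_0_r, Rabs_pos_eq by apply dist2_ge0.
      unfold a, b, a', b'. lra. }
  destruct (cs_inj _ Hphi _ _ _ _ HB HB' Heq) as [EB _]. subst B'.
  destruct (CBG (eps / 2)) as [N1 HN1]; [lra|]. destruct (CB'G (eps / 2)) as [N2 HN2]; [lra|].
  specialize (HN1 (N1 + N2)%nat ltac:(lia)). specialize (HN2 (N1 + N2)%nat ltac:(lia)).
  destruct (Hf (G (N1 + N2)%nat)) as [_ [_ [_ Hfar]]].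
  unfold R_dist in HN1, HN2. apply Rabs_def2 in HN1. apply Rabs_def2 in HN2.
  assert (Rabs (b (G (N1 + N2)%nat) - b' (G (N1 + N2)%nat)) < eps) by (apply Rabs_def1; lra).
  unfold b, b' in *. lra.
Qed.

Lemma level_unif eps : 0 < eps -> exists d, 0 < d /\
  forall p q, inD p -> inD q -> dist2 p q < d -> Rabs (level p - level q) < eps.
Proof.
  intros He. destruct (phi_level_unif eps He) as [d [Hd Hunif]].
  exists d. split; [exact Hd|]. intros p q Hp Hq Hpq.
  destruct (phi_reduced p Hp) as [a [Ha Ea]]. destruct (phi_reduced q Hq) as [a' [Ha' Ea']].
  apply (Hunif a _ a'); try apply level_range; auto; try lra.
  rewrite Ea, Ea'. exact Hpq.
Qed.

Lemma radial_path_continuous y s1 : 0 <= s1 -> continuous_path (fun x => phi y (clamp 0 s1 x)).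
Proof.
  intros Hs x eps He. destruct (cs_cont _ Hphi y (clamp 0 s1 x) eps He) as [d [Hd Hcont]].
  exists d. split; [exact Hd|]. intros x' Hx'. apply Hcont.
  - rewrite Rminus_diag, Rabs_R0. exact Hd.
  - pose proof (clamp_lipschitz 0 s1 x x' Hs). rewrite Rabs_minus_sym in Hx'. lra.
Qed.

Lemma level_crossing (g : pt -> pt) (P : R -> pt) a b c :
  cont_on_D g -> (forall p, inD p -> inD (g p)) ->
  (forall x, inD (P x)) -> continuous_path P -> a <= b ->
  (level (g (P a)) - c) * (level (g (P b)) - c) <= 0 ->
  exists x, a <= x <= b /\ level (g (P x)) = c.
Proof.
  intros Hg HgD HP HPc Hab Hsign.
  destruct (IVT_cor (fun x => level (g (P x)) - c) a b) as [x [Hx Ex]]; auto.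
  - apply continuity_of_eps_delta. intros x eps He.
    destruct (level_unif eps He) as [d1 [Hd1 H1]].
    destruct (Hg (P x) (HP x) d1 Hd1) as [d2 [Hd2 H2]].
    destruct (HPc x d2 Hd2) as [d3 [Hd3 H3]].
    exists d3. split; [exact Hd3|]. intros x' Hx'.
    replace (level (g (P x')) - c - (level (g (P x)) - c))
      with (level (g (P x')) - level (g (P x))) by ring.
    apply H1; auto. rewrite dist2_sym. apply H2; auto.
  - exists x. split; [exact Hx|]. lra.
Qed.

Section Unwrapping.

Variable fbar : R -> pt -> pt.
Hypothesis Hfbar : unwrapping phi fbar.
Variable t : R.
Hypothesis Ht : inJ t.

Lemma fbar_inD p : inD p -> inD (fbar t p).
Proof. intros HD. destruct (uw_near _ _ Hfbar t Ht) as [HfD _]. exact (HfD p HD). Qed.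

Lemma H_inD p : inD p -> inD (H phi fbar t p).
Proof. intros HD. apply Upsilon_inD, fbar_inD, HD. Qed.

Lemma fbar_fixes_low p : inD p -> level p <= 3/4 -> fbar t p = p.
Proof.
  intros HD Hl. pose proof (level_range p HD).
  rewrite <- (phi_angle_level p HD), (uw_id _ _ Hfbar) by (auto; lra). reflexivity.
Qed.

Lemma H_phi_low y s : 0 <= s <= 1/2 -> H phi fbar t (phi y s) = phi y (2 * s).
Proof.
  intros Hs. unfold H. rewrite (uw_id _ _ Hfbar t y s), Upsilon_phi by (auto; lra).
  f_equal. unfold Rmin; destruct Rle_dec; lra.
Qed.

(* At a crossing, g (P x) has level 5/8, where fbar_t is the identity, so h moves it by
   less than d/2; but a point of level 5/8 cannot be d-close to one of level < 1/2. *)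
Lemma no_crossing_near_low_levels d (h g : pt -> pt) (P : R -> pt) a b :
  (forall p q, inD p -> inD q -> dist2 p q < d -> Rabs (level p - level q) < 1/8) ->
  (forall p, inD p -> dist2 (fbar t p) (h p) < d / 2) ->
  cont_on_D g -> (forall p, inD p -> inD (g p)) -> (forall p, inD p -> h (g p) = p) ->
  (forall x, inD (P x)) -> continuous_path P -> a <= b ->
  (forall x, a <= x <= b -> exists r, inD r /\ level r < 1/2 /\ dist2 (P x) r < d / 2) ->
  (level (g (P a)) - 5/8) * (level (g (P b)) - 5/8) <= 0 -> False.
Proof.
  intros Hunif Hclose Hgc HgD Hhg HP HPc Hab Hnear Hsign.
  destruct (level_crossing g P a b (5/8) Hgc HgD HP HPc Hab Hsign) as [x [Hx Ex]].
  destruct (Hnear x Hx) as [r [Hr [Hlr Hxr]]].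
  assert (HgxD : inD (g (P x))) by (apply HgD, HP).
  assert (Hmove : dist2 (g (P x)) (P x) < d / 2).
  { pose proof (Hclose _ HgxD) as Hc.
    rewrite fbar_fixes_low, Hhg in Hc by (auto; lra). exact Hc. }
  pose proof (dist2_triangle (g (P x)) (P x) r).
  specialize (Hunif (g (P x)) r HgxD Hr ltac:(lra)). rewrite Ex in Hunif.
  apply Rabs_def2 in Hunif. lra.
Qed.

(* Otherwise, with h a homeomorphism close to fbar_t and g its inverse, level o g would
   pass from above 5/8 (at h q, where g gives q) to 0 (at h s0, where g gives s0)
   along the segment from h q to w = fbar_t q, the ray from w down to the point s0 of S,
   and the segment from s0 to h s0 -- a path staying close to levels < 1/2. *)
Lemma fbar_low_preimage q : inD q -> level (fbar t q) < 1/2 -> level q <= 3/4.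
Proof.
  intros HqD Hw. apply Rnot_lt_le. intro Hq.
  set (w := fbar t q) in *.
  assert (HwD : inD w) by (apply fbar_inD, HqD).
  pose proof (level_range w HwD) as Hlw.
  set (s0 := phi (angle w) 0).
  assert (Hs0D : inD s0) by (apply inD_phi; lra).
  assert (Ls0 : level s0 = 0) by (apply level_phi; lra).
  destruct (level_unif (1/8)) as [d [Hd Hunif]]; [lra|].
  destruct (uw_near _ _ Hfbar t Ht) as [_ Happrox].
  destruct (Happrox (d / 2)) as [h [[HhD [_ [g [HgD [Hgc Hgh]]]]] Hclose]]; [lra|].
  assert (Hhg : forall p, inD p -> h (g p) = p) by (intros p Hp; apply Hgh, Hp).
  pose proof (no_crossing_near_low_levels d h g) as Hno.
  assert (Hqq : dist2 w (h q) < d / 2) by (apply Hclose, HqD).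
  assert (Hs0 : dist2 s0 (h s0) < d / 2)
    by (rewrite <- (fbar_fixes_low s0) at 1 by (auto; lra); apply Hclose, Hs0D).
  destruct (Rle_lt_dec (level (g w)) (5/8)) as [Cw|Cw].
  - apply (Hno (seg_path (h q) w) 0 1); auto using seg_path_inD, seg_path_continuous; [lra| |].
    + intros x _. exists w. pose proof (seg_path_ends (h q) w x).
      rewrite dist2_sym in Hqq. repeat split; auto; lra.
    + rewrite seg_path_0, seg_path_1, (proj1 (Hgh q HqD)). nra.
  - destruct (Rle_lt_dec (level (g s0)) (5/8)) as [Cs|Cs].
    + apply (Hno (fun x => phi (angle w) (clamp 0 (level w) x)) 0 (level w));
        auto; try lra.
      * intro x. apply inD_phi. pose proof (clamp_range 0 (level w) x ltac:(lra)). lra.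
      * apply radial_path_continuous. lra.
      * intros x _. exists (phi (angle w) (clamp 0 (level w) x)).
        pose proof (clamp_range 0 (level w) x ltac:(lra)).
        rewrite level_phi, dist2_refl by lra. split; [apply inD_phi|split]; lra.
      * rewrite !clamp_id by lra. fold s0. rewrite phi_angle_level by exact HwD. nra.
    + apply (Hno (seg_path s0 (h s0)) 0 1); auto using seg_path_inD, seg_path_continuous;
        [lra| |].
      * intros x _. exists s0. pose proof (seg_path_ends s0 (h s0) x).
        repeat split; auto; lra.
      * rewrite seg_path_0, seg_path_1, (proj1 (Hgh s0 Hs0D)), Ls0. nra.
Qed.

Lemma H_preimage_phi q y s : inD q -> 0 <= s < 1 -> H phi fbar t q = phi y s ->
  q = phi y (s / 2).
Proof.
  intros HqD Hs E.
  assert (HwD : inD (fbar t q)) by (apply fbar_inD, HqD).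
  pose proof (level_range _ HwD) as Hlw. pose proof (level_range q HqD) as Hlq.
  unfold H in E. rewrite Upsilon_coords in E.
  assert (Hw : level (fbar t q) < 1/2).
  { apply Rnot_le_lt. intro Hw.
    replace (Rmin (2 * level (fbar t q)) 1) with 1 in E by (unfold Rmin; destruct Rle_dec; lra).
    destruct (cs_inj _ Hphi _ 1 _ s ltac:(lra) ltac:(lra) E). lra. }
  assert (Fq : fbar t q = q) by (apply fbar_fixes_low, fbar_low_preimage; auto).
  rewrite Fq in E, Hw.
  replace (Rmin (2 * level q) 1) with (2 * level q) in E by (unfold Rmin; destruct Rle_dec; lra).
  destruct (cs_inj _ Hphi _ (2 * level q) _ s ltac:(lra) ltac:(lra) E) as [Es [Es1 | [k Ek]]];
    [lra|].
  rewrite <- (phi_angle_level q HqD) at 1. rewrite Ek, phi_periodic. f_equal. lra.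
Qed.

Lemma Psi_lt1 y s n : s < 1 -> Psi phi fbar t y s n = phi y (s / 2 ^ n).
Proof. intros Hs. unfold Psi. destruct Rlt_dec; [reflexivity|lra]. Qed.

Lemma Psi_ge1 y s n : 1 <= s ->
  Psi phi fbar t y s n =
  if Nat.leb n (k_of s) then Nat.iter (k_of s - n) (H phi fbar t) (phi y (v_of s))
  else phi y (v_of s / 2 ^ (n - k_of s)).
Proof. intros Hs. unfold Psi. destruct Rlt_dec; [lra|reflexivity]. Qed.

Lemma Psi_tail y s n : 0 <= s -> (tail_start s < n)%nat ->
  Psi phi fbar t y s n = phi y (height s / 2 ^ n) /\ 0 <= height s / 2 ^ n <= 1/2.
Proof.
  intros Hs Hn. unfold tail_start in Hn.
  destruct n as [|n]; [lia|]. rewrite div_pow2_S.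
  destruct (Rlt_dec s 1) as [h|h].
  - rewrite Psi_lt1, height_lt1, div_pow2_S by exact h.
    split; [reflexivity|]. pose proof (div_pow2_le s n ltac:(lra)). lra.
  - rewrite Psi_ge1 by lra. destruct (Nat.leb_spec (S n) (k_of s)); [lia|].
    destruct (height_ge1 s ltac:(lra)) as [E _]. pose proof (v_of_range s ltac:(lra)).
    assert (Hv : height s / 2 ^ n = v_of s / 2 ^ (n - k_of s)).
    { rewrite E. replace n with (k_of s + (n - k_of s))%nat at 1 by lia.
      rewrite pow_add. pose proof (pow_lt 2 (k_of s) ltac:(lra)).
      pose proof (pow_lt 2 (n - k_of s) ltac:(lra)). field. lra. }
    replace (S n - k_of s)%nat with (S (n - k_of s)) by lia.
    rewrite div_pow2_S, Hv. split; [reflexivity|].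
    pose proof (div_pow2_le (v_of s) (n - k_of s) ltac:(lra)). lra.
Qed.

Lemma Psi_inD y s n : 0 <= s -> inD (Psi phi fbar t y s n).
Proof.
  intros Hs. destruct (Rlt_dec s 1) as [h|h].
  - rewrite Psi_lt1 by exact h. apply inD_phi. pose proof (div_pow2_le s n ltac:(lra)). lra.
  - rewrite Psi_ge1 by lra. pose proof (v_of_range s ltac:(lra)).
    destruct (Nat.leb n (k_of s)).
    + induction (k_of s - n)%nat as [|m IH]; simpl; [apply inD_phi; lra|apply H_inD, IH].
    + apply inD_phi. pose proof (div_pow2_le (v_of s) (n - k_of s) ltac:(lra)). lra.
Qed.

Lemma Psi_step y s n : 0 <= s ->
  H phi fbar t (Psi phi fbar t y s (S n)) = Psi phi fbar t y s n.
Proof.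
  intros Hs. destruct (Rlt_dec s 1) as [h|h].
  - pose proof (div_pow2_le s n ltac:(lra)). pose proof (pow_lt 2 n ltac:(lra)).
    rewrite !Psi_lt1, div_pow2_S, H_phi_low by (auto; lra). f_equal. field. lra.
  - rewrite !Psi_ge1 by lra. pose proof (v_of_range s ltac:(lra)).
    destruct (Nat.leb_spec (S n) (k_of s)); destruct (Nat.leb_spec n (k_of s)); try lia.
    + replace (k_of s - n)%nat with (S (k_of s - S n)) by lia. reflexivity.
    + replace n with (k_of s) by lia. rewrite Nat.sub_diag, Nat.sub_succ_l, Nat.sub_diag by lia.
      simpl. rewrite H_phi_low by lra. f_equal. field.
    + replace (S n - k_of s)%nat with (S (n - k_of s)) by lia.
      pose proof (div_pow2_le (v_of s) (n - k_of s) ltac:(lra)).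
      pose proof (pow_lt 2 (n - k_of s) ltac:(lra)).
      rewrite div_pow2_S, H_phi_low by lra. f_equal. field. lra.
Qed.

Lemma Psi_in_Dhat y s : 0 <= s -> in_Dhat phi fbar t (Psi phi fbar t y s).
Proof. intros Hs. split; intro n; [apply Psi_inD|apply Psi_step]; exact Hs. Qed.

Lemma Psi_notin_Ihat y s : 0 <= s -> ~ in_Ihat (Psi phi fbar t y s).
Proof.
  intros Hs HI. specialize (HI (S (tail_start s))).
  destruct (Psi_tail y s (S (tail_start s)) Hs ltac:(lia)) as [E Hl].
  rewrite E in HI. revert HI. apply phi_notin_I. lra.
Qed.

Lemma Psi_inj y s y' s' : inA y s -> inA y' s' ->
  (forall n, Psi phi fbar t y s n = Psi phi fbar t y' s' n) -> y = y' /\ s = s'.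
Proof.
  intros [Hy Hs] [Hy' Hs'] E.
  set (n := S (tail_start s + tail_start s')).
  destruct (Psi_tail y s n Hs ltac:(unfold n; lia)) as [E1 R1].
  destruct (Psi_tail y' s' n Hs' ltac:(unfold n; lia)) as [E2 R2].
  specialize (E n). rewrite E1, E2 in E.
  destruct (cs_inj _ Hphi _ (height s / 2 ^ n) _ (height s' / 2 ^ n) ltac:(lra) ltac:(lra) E)
    as [Eh [Eh1 | [k Ek]]]; [lra|].
  split; [exact (angle_eq_mod_2PI y y' k Hy Hy' Ek)|].
  apply height_inj; auto. pose proof (pow_lt 2 n ltac:(lra)).
  apply Rmult_eq_reg_r with (/ 2 ^ n); [exact Eh|]. apply Rinv_neq_0_compat. lra.
Qed.

Lemma Dhat_tail_on_ray z N y c : in_Dhat phi fbar t z -> 0 <= c < 1 -> z N = phi y c ->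
  forall m, z (N + m)%nat = phi y (c / 2 ^ m).
Proof.
  intros [HzD Hz] Hc HN m. induction m as [|m IH].
  - rewrite Nat.add_0_r, HN. f_equal. simpl. field.
  - rewrite Nat.add_succ_r, div_pow2_S. apply H_preimage_phi; auto.
    + pose proof (div_pow2_le c m ltac:(lra)). lra.
    + rewrite Hz. exact IH.
Qed.

Lemma Psi_surj z : in_Dhat phi fbar t z -> ~ in_Ihat z ->
  exists y s, inA y s /\ forall n, Psi phi fbar t y s n = z n.
Proof.
  intros Hz HnI. pose proof Hz as [HzD Hzs].
  destruct (not_all_ex_not _ _ HnI) as [N HN].
  pose proof (level_lt1_of_notin_I (z N) (HzD N) HN) as Hc1.
  pose proof (level_range (z N) (HzD N)) as Hc.
  destruct (phi_reduced (z N) (HzD N)) as [y [Hy EN]].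
  set (c := level (z N)) in *.
  pose proof (Dhat_tail_on_ray z N y c Hz ltac:(lra) (eq_sym EN)) as Htail.
  pose proof (pow_lt 2 N ltac:(lra)) as H2N.
  destruct (height_surj (c * 2 ^ N)) as [s [Hs Es]]; [nra|].
  exists y, s. split; [split; assumption|].
  intro n. symmetry. revert n.
  apply (backward_orbits_agree (H phi fbar t) z _ (N + S (tail_start s))); auto.
  - intro n. apply Psi_step, Hs.
  - intros n Hn. replace n with (N + (n - N))%nat at 1 by lia.
    rewrite Htail, (proj1 (Psi_tail y s n Hs ltac:(lia))), Es. f_equal.
    replace n with (N + (n - N))%nat at 2 by lia. rewrite pow_add.
    pose proof (pow_lt 2 (n - N) ltac:(lra)). field. lra.
Qed.

End Unwrapping.

End Coordinates.

Theorem mainTheorem6 (phi : R -> R -> pt) (fbar : R -> pt -> pt)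
  (Hphi : coord_system phi) (Hfbar : unwrapping phi fbar)
  (t : R) (Ht : inJ t) :
  (forall y s, inA y s ->
     in_Dhat phi fbar t (Psi phi fbar t y s) /\ ~ in_Ihat (Psi phi fbar t y s)) /\
  (forall y s y' s', inA y s -> inA y' s' ->
     (forall n, Psi phi fbar t y s n = Psi phi fbar t y' s' n) ->
     y = y' /\ s = s') /\
  (forall z, in_Dhat phi fbar t z -> ~ in_Ihat z ->
     exists y s, inA y s /\ forall n, Psi phi fbar t y s n = z n).
Proof.
  split; [|split].
  - intros y s [_ Hs].
    split; [apply Psi_in_Dhat|apply Psi_notin_Ihat]; assumption.
  - intros y s y' s'. apply Psi_inj. exact Hphi.
  - apply Psi_surj; assumption.
Qed.
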